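(* Fix $c>0$, $\lambda>1$, one of the six models, $N$, and $1\le N_1,N_2\le N-1$ with $N_1+N_2=N$. For every $r=1,\dots,\lfloor cN\rfloor$, $$\mathbb{E}\big[\log Z(\mathbb{G}(N,\lfloor cN\rfloor,r))\big]\ge\mathbb{E}\big[\log Z(\mathbb{G}(N,\lfloor cN\rfloor,r-1))\big].$$
   Context: Let $K\ge2$, $\chi=\{0,\dots,q-1\}$, $[N_1]=\{1,\dots,N_1\}$, $[N_2]=\{N_1+1,\dots,N\}$. For $0\le r\le\lfloor cN\rfloor$, $\mathbb{G}(N,\lfloor cN\rfloor,r)$ is the random hypergraph on $[N]$ with $\lfloor cN\rfloor$ independently generated directed $K$-hyperedges: the first $r$ uniform on $[N]^K$, each remaining one uniform on $[N_1]^K$ with probability $N_1/N$ and uniform on $[N_2]^K$ with probability $N_2/N$; potentials are assigned as in the model. $H(x)=\sum_iH_i(x_i)+\sum_{e\in E}H_e(x_e)$ and $Z(G)=\sum_{x\in\chi^N}\lambda^{H(x)}$, $\lambda^{-\infty}=0$. Models: Independent set ($K=2,q=2$, $H_i(1)=1,H_i(0)=0$, $H_e(1,1)=-\infty$, else $0$); MAX-CUT ($K=2,q=2$, $H_i\equiv0$, $H_e(x,y)=\mathbf 1[x\ne y]$); anti-ferromagnetic Ising ($K=2,q=2$, fixed $\beta>0,B\in\mathbb{R}$, $H_i(0)=-B,H_i(1)=B$, $H_e(x,y)=-\beta$ if $x=y$, $\beta$ otherwise); $q$-Coloring ($K=2$, $H_i\equiv0$, $H_e(x,y)=\mathbf 1[x\ne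 y]$); K-SAT ($q=2$, $H_i\equiv0$, independent uniform $a_e\in\{0,1\}^K$, $H_e(a_e)=0$, $1$ otherwise); NAE-K-SAT ($H_e(a_e)=H_e(\mathbf1-a_e)=0$, $1$ otherwise). *)

From HB Require Import structures.
From mathcomp Require Import all_boot all_order all_algebra.
From mathcomp Require Import all_classical all_reals all_analysis.
Unset Printing Implicit Defensive.
Import Order.TTheory GRing.Theory Num.Theory.
Local Open Scope ring_scope.

(* The six models.  Ising carries (beta, B); Coloring carries q;
   K-SAT / NAE-K-SAT carry K. *)
Inductive model (R : Type) :=
| IndSet | MaxCut | Ising of R & R | Coloring of nat | KSAT of nat | NAEKSAT of nat.
Arguments IndSet {R}. Arguments MaxCut {R}.

Section Models.
Variable R : realType.

Definition arity (m : model R) : nat :=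
  match m with KSAT K | NAEKSAT K => K | _ => 2%N end.

(* number of spin values q, chi = {0,..,q-1} *)
Definition spins (m : model R) : nat :=
  match m with Coloring q => q | _ => 2%N end.

Definition model_ok (m : model R) : Prop :=
  match m with
  | Ising beta _ => 0 < beta
  | Coloring q => (0 < q)%N
  | KSAT K | NAEKSAT K => (2 <= K)%N
  | _ => True
  end.

Definition has_signs (m : model R) : bool :=
  match m with KSAT _ | NAEKSAT _ => true | _ => false end.

Definition Hnode (m : model R) (x : nat) : \bar R :=
  match m with
  | IndSet => if x == 1%N then 1%E else 0%E
  | Ising _ B => if x == 0%N then (- B)%:E else B%:E
  | _ => 0%E
  end.

Definition Hedge (m : model R) (a : 'I_(arity m) -> bool)
  (xe : 'I_(arity m) -> nat) : \bar R :=
  match m return ('I_(arity m) -> bool) -> ('I_(arity m) -> nat) -> \bar R with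
  | IndSet => fun _ xe =>
      if [forall j, xe j == 1%N] then -oo%E else 0%E
  | MaxCut | Coloring _ => fun _ xe =>
      if [forall j, forall j', xe j == xe j'] then 0%E else 1%E
  | Ising beta _ => fun _ xe =>
      if [forall j, forall j', xe j == xe j'] then (- beta)%:E else beta%:E
  | KSAT K => fun a xe =>
      if [forall j, xe j == nat_of_bool (a j)] then 0%E else 1%E
  | NAEKSAT K => fun a xe =>
      if [forall j, xe j == nat_of_bool (a j)]
         || [forall j, xe j == nat_of_bool (~~ a j)] then 0%E else 1%E
  end a xe.

(* lambda^h, with lambda^(-oo) = 0 (+oo never occurs) *)
Definition lampow (lam : R) (h : \bar R) : R :=
  match h with
  | EFin r => powR lam r
  | _ => 0
  end.

(* a directed K-hyperedge together with its sign vector *)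
Definition hedge (m : model R) (N : nat) : Type :=
  ({ffun 'I_(arity m) -> 'I_N} * {ffun 'I_(arity m) -> bool})%type.

Definition hgraph (m : model R) (N M : nat) : Type :=
  {ffun 'I_M -> hedge m N}.

Definition Ham (m : model R) (N M : nat) (G : hgraph m N M)
  (x : {ffun 'I_N -> 'I_(spins m)}) : \bar R :=
  ((\sum_(i < N) Hnode m (x i))
   + \sum_(k < M) Hedge m (G k).2 (fun j => nat_of_ord (x ((G k).1 j))))%E.

Definition Zpart (m : model R) (lam : R) (N M : nat) (G : hgraph m N M) : R :=
  \sum_(x : {ffun 'I_N -> 'I_(spins m)}) lampow lam (Ham m N M G x).

(* Vertices are 'I_N (0-based); [N1] is the set
   of indices < N1 and [N2] the set of indices >= N1. *)
Definition pvert (m : model R) (N N1 N2 r k : nat)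
  (v : {ffun 'I_(arity m) -> 'I_N}) : R :=
  if (k < r)%N then (N ^ arity m)%:R^-1
  else (N1%:R / N%:R) * (N1 ^ arity m)%:R^-1
         * (([forall j, v j < N1])%N : bool)%:R
     + (N2%:R / N%:R) * (N2 ^ arity m)%:R^-1
         * (([forall j, N1 <= v j])%N : bool)%:R.

Definition psign (m : model R) (a : {ffun 'I_(arity m) -> bool}) : R :=
  if has_signs m then (2 ^ arity m)%:R^-1
  else (a == [ffun => false])%:R.

Definition pgraph (m : model R) (N N1 N2 M r : nat) (G : hgraph m N M) : R :=
  \prod_(k < M) (pvert m N N1 N2 r k (G k).1 * psign m (G k).2).

Definition ElogZ (m : model R) (lam : R) (N N1 N2 M r : nat) : R :=
  \sum_(G : hgraph m N M) pgraph m N N1 N2 M r G * ln (Zpart m lam N M G).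

End Models.

From HB Require Import structures.
From mathcomp Require Import all_boot all_order all_algebra.
From mathcomp Require Import all_classical all_reals all_analysis.
From mathcomp Require Import ring lra zify.
From Stdlib Require Import Lia.
Import Order.TTheory GRing.Theory Num.Theory.
Local Open Scope ring_scope.

(* G(N, M, r - 1) and G(N, M, r) differ only in the law of hyperedge r - 1:
   uniform on [N]^K versus uniform on one block. Freezing the other hyperedges,
   in all six models the weight of the resampled edge e has the form
   A (1 - d sum_c prod_j phi_c(a_j, x_j)) with nonnegative factors, hence
   ln Z = const + ln (1 - y(e)) where y(e) in [0, 1) is a nonnegative
   multilinear function of the edge. As - ln (1 - y) = int_0^1 y / (1 - s y) ds
   has nonnegative Taylor coefficients, it suffices that every moment E[y^t]
   is smaller for the uniform edge; expanding y^t, this is Jensen's inequality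
   ((a + b) / N)^K <= N1/N (a / N1)^K + N2/N (b / N2)^K. *)

Section LnOneMinus.
Context {R : realType}.
Implicit Types (a b x y C : R) (n : nat).

Lemma ln_le_subr1 x : 0 < x -> ln x <= x - 1.
Proof.
move=> x0; have := @le_ln1Dx R (x - 1).
by rewrite addrCA subrr addr0; apply; lra.
Qed.

Lemma lnB_le {a b} : 0 < a -> 0 < b -> ln b - ln a <= b / a - 1.
Proof. by move=> a0 b0; rewrite -ln_div ?posrE // ln_le_subr1 ?divr_gt0. Qed.

Lemma lnB_ge {a b} : 0 < a -> 0 < b -> 1 - a / b <= ln b - ln a.
Proof. by move=> a0 b0; have := lnB_le b0 a0; lra. Qed.

Lemma le_of_le_add_divn {a b} C :
  (forall n, (0 < n)%N -> a <= b + C / n%:R) -> a <= b.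
Proof.
move=> H; apply/ler_addgt0Pr => e e0.
set n := (Num.truncn (C / e)).+1.
apply: (le_trans (H n isT)); rewrite lerD2l ler_pdivrMr ?ltr0n // mulrC.
by rewrite -ler_pdivrMr // ltW // truncnS_gt.
Qed.

Lemma exprn_le_inv_mul y n : 0 <= y < 1 -> (0 < n)%N ->
  y ^+ n <= ((1 - y) * n%:R)^-1.
Proof.
move=> /andP[y0 y1] n0.
have geom : (1 - y) * \sum_(i < n) y ^+ i = 1 - y ^+ n.
  by apply: oppr_inj; rewrite -mulNr !opprB subrX1.
have le_sum : n%:R * y ^+ n <= \sum_(i < n) y ^+ i.
  have -> : n%:R * y ^+ n = \sum_(i < n) y ^+ n.
    by rewrite sumr_const card_ord mulr_natl.
  apply: ler_sum => i _.
  by apply: ler_wiXn2l => //; [exact: ltW | exact: ltnW].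
rewrite -[_^-1]mul1r ler_pdivlMr ?mulr_gt0 ?subr_gt0 ?ltr0n //.
apply: le_trans (_ : (1 - y) * \sum_(i < n) y ^+ i <= 1).
  by rewrite mulrC -mulrA ler_wpM2l // subr_ge0 ltW.
by rewrite geom lerBlDr lerDl exprn_ge0.
Qed.
End LnOneMinus.

(* [- ln (1 - y)] is the integral of [lnkernel s y] over [s] in [[0, 1]], and
   the Taylor coefficients of [lnkernel s] are powers of [s] >= 0. *)
Definition lnkernel {R : realType} (s y : R) := y / (1 - s * y).

Section LnKernel.
Context {R : realType}.
Implicit Types (s y : R) (n : nat).

Lemma lnkernel_den_gt0 {s y} : 0 <= s <= 1 -> 0 <= y < 1 -> 0 < 1 - s * y.
Proof.
move=> /andP[s0 s1] /andP[y0 y1]; rewrite subr_gt0.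
apply: (le_lt_trans (y := 1 * y)); last by rewrite mul1r.
exact: ler_wpM2r.
Qed.

Lemma lnkernel_ge0 {s y} : 0 <= s <= 1 -> 0 <= y < 1 -> 0 <= lnkernel s y.
Proof.
move=> hs hy; have /andP[y0 _] := hy.
by rewrite divr_ge0 // ltW // lnkernel_den_gt0.
Qed.

Lemma lnkernel_le {s y} : 0 <= s <= 1 -> 0 <= y < 1 -> lnkernel s y <= (1 - y)^-1.
Proof.
move=> hs hy; have d0 := lnkernel_den_gt0 hs hy.
case/andP: hs => s0 s1; case/andP: hy => y0 y1.
have le_den : 1 - y <= 1 - s * y.
  rewrite lerD2l lerN2; apply: (le_trans (y := 1 * y)); last by rewrite mul1r.
  exact: ler_wpM2r.
apply: (le_trans (y := 1 / (1 - s * y))).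
  by rewrite ler_wpM2r ?invr_ge0 ?ltW.
by rewrite div1r lef_pV2 ?posrE // subr_gt0.
Qed.

Lemma lnkernel_expansion {s y} n : 0 <= s <= 1 -> 0 <= y < 1 ->
  lnkernel s y = \sum_(t < n) s ^+ t * y ^+ t.+1 + (s * y) ^+ n * lnkernel s y.
Proof.
move=> hs hy; have /lt0r_neq0 d0 := lnkernel_den_gt0 hs hy.
have geom : (1 - s * y) * \sum_(t < n) (s * y) ^+ t = 1 - (s * y) ^+ n.
  by apply: oppr_inj; rewrite -mulNr !opprB subrX1.
have hd : lnkernel s y * (1 - s * y) = y by rewrite /lnkernel mulfVK.
apply: (mulIf d0); rewrite mulrDl hd -mulrA hd mulr_suml.
have -> : \sum_(t < n) s ^+ t * y ^+ t.+1 * (1 - s * y) =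
    y * ((1 - s * y) * \sum_(t < n) (s * y) ^+ t).
  by rewrite !mulr_sumr; apply: eq_bigr => t _; rewrite exprMn exprS; ring.
by rewrite geom; ring.
Qed.

Lemma lnkernel_tail_le {s y} n : 0 <= s <= 1 -> 0 <= y < 1 -> (0 < n)%N ->
  (s * y) ^+ n * lnkernel s y <= (1 - y) ^-2 / n%:R.
Proof.
move=> hs hy n0; have k0 := lnkernel_ge0 hs hy; have k1 := lnkernel_le hs hy.
case/andP: hs => s0 s1; have /andP[y0 y1] := hy.
have d : 0 < 1 - y by rewrite subr_gt0.
apply: (le_trans (y := y ^+ n * (1 - y)^-1)).
  apply: ler_pM => //; first by rewrite exprn_ge0 ?mulr_ge0.
  by rewrite exprMn -[leRHS]mul1r ler_wpM2r ?exprn_ge0 ?exprn_ile1.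
apply: (le_trans (y := ((1 - y) * n%:R)^-1 * (1 - y)^-1)).
  by rewrite ler_wpM2r ?invr_ge0 ?(ltW d) ?exprn_le_inv_mul.
by rewrite invfM mulrAC -expr2 exprVn.
Qed.

Lemma riemann_node_gt0 {y n i} : 0 <= y < 1 -> (0 < n)%N -> (i <= n)%N ->
  0 < 1 - i%:R / n%:R * y.
Proof.
move=> hy n0 ilen; apply: lnkernel_den_gt0 hy.
by rewrite divr_ge0 //= ler_pdivrMr ?ltr0n // mul1r ler_nat.
Qed.

Lemma ln1m_telescope y n : (0 < n)%N ->
  ln (1 - y) = \sum_(i < n) (ln (1 - i.+1%:R / n%:R * y) - ln (1 - i%:R / n%:R * y)).
Proof.
move=> n0; rewrite -(big_mkord xpredT
  (fun i => ln (1 - i.+1%:R / n%:R * y) - ln (1 - i%:R / n%:R * y))).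
by rewrite telescope_sumr // !mul0r subr0 ln1 subr0 divff ?mul1r // pnatr_eq0 -lt0n.
Qed.

(* Left and right Riemann sums of [ln (1 - y) = - int_0^1 lnkernel s y ds]. *)
Lemma ln1m_le_riemann_left y n : 0 <= y < 1 -> (0 < n)%N ->
  ln (1 - y) <= - (n%:R^-1 * \sum_(i < n) lnkernel (i%:R / n%:R) y).
Proof.
move=> hy n0; rewrite (ln1m_telescope _ _ n0) mulr_sumr -sumrN; apply: ler_sum => i _.
have a0 := riemann_node_gt0 hy n0 (ltnW (ltn_ord i)).
have a1 := riemann_node_gt0 hy n0 (ltn_ord i).
apply: (le_trans (lnB_le a0 a1)); rewrite le_eqVlt; apply/predU1P; left.
have nn : n%:R != 0 :> R by rewrite pnatr_eq0 -lt0n.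
rewrite /lnkernel -addn1 natrD; field; rewrite nn /=.
have -> : n%:R - i%:R * y = n%:R * (1 - i%:R / n%:R * y) by field.
by rewrite mulf_neq0 // lt0r_neq0.
Qed.

Lemma ln1m_ge_riemann_right y n : 0 <= y < 1 -> (0 < n)%N ->
  - (n%:R^-1 * \sum_(i < n) lnkernel (i.+1%:R / n%:R) y) <= ln (1 - y).
Proof.
move=> hy n0; rewrite (ln1m_telescope _ _ n0) mulr_sumr -sumrN; apply: ler_sum => i _.
have a0 := riemann_node_gt0 hy n0 (ltnW (ltn_ord i)).
have a1 := riemann_node_gt0 hy n0 (ltn_ord i).
apply: (le_trans _ (lnB_ge a0 a1)); rewrite le_eqVlt; apply/predU1P; left.
have nn : n%:R != 0 :> R by rewrite pnatr_eq0 -lt0n.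
rewrite /lnkernel -addn1 natrD; field; rewrite nn /=.
have -> : n%:R - (i%:R + 1) * y = n%:R * (1 - i.+1%:R / n%:R * y).
  by rewrite -addn1 natrD; field.
by rewrite mulf_neq0 // lt0r_neq0.
Qed.
End LnKernel.

Section MomentComparison.
Context {R : realType} {E : finType}.
Variables p q y : E -> R.
Hypotheses (p_ge0 : forall e, 0 <= p e) (q_ge0 : forall e, 0 <= q e).
Hypothesis y_in01 : forall e, 0 <= y e < 1.
Hypothesis moments_le :
  forall t, \sum_e p e * y e ^+ t.+1 <= \sum_e q e * y e ^+ t.+1.

Lemma sum_lnkernel_le_of_moments s : 0 <= s <= 1 ->
  \sum_e p e * lnkernel s (y e) <= \sum_e q e * lnkernel s (y e).
Proof.
move=> hs; have s0 : 0 <= s by case/andP: hs.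
apply: (le_of_le_add_divn (\sum_e p e * (1 - y e) ^-2)) => n n0.
pose tail e := (s * y e) ^+ n * lnkernel s (y e).
have tail_ge0 e : 0 <= tail e.
  by rewrite mulr_ge0 ?exprn_ge0 ?lnkernel_ge0 ?mulr_ge0 //; case/andP: (y_in01 e).
have expand w : \sum_e w e * lnkernel s (y e) =
    \sum_(t < n) s ^+ t * \sum_e w e * y e ^+ t.+1 + \sum_e w e * tail e.
  under [X in _ = X + _]eq_bigr do rewrite mulr_sumr.
  rewrite exchange_big -big_split /=; apply: eq_bigr => e _.
  rewrite (lnkernel_expansion n hs (y_in01 e)) mulrDr mulr_sumr; congr (_ + _).
  by apply: eq_bigr => t _; ring.
rewrite !expand -addrA lerD //.
  by apply: ler_sum => t _; rewrite ler_wpM2l ?exprn_ge0.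
rewrite mulr_suml -[leLHS]add0r lerD ?sumr_ge0 // => [e _|]; first exact: mulr_ge0.
by apply: ler_sum => e _; rewrite -mulrA ler_wpM2l ?lnkernel_tail_le.
Qed.

Lemma sum_ln1m_le_of_moments :
  \sum_e q e * ln (1 - y e) <= \sum_e p e * ln (1 - y e).
Proof.
apply: (le_of_le_add_divn
  (\sum_e p e * lnkernel 1 (y e) - \sum_e p e * lnkernel 0 (y e))) => n n0.
pose F w j := \sum_e w e * lnkernel (j%:R / n%:R) (y e).
have nodeP j : (j <= n)%N -> 0 <= (j%:R / n%:R : R) <= 1.
  by move=> jn; rewrite divr_ge0 //= ler_pdivrMr ?ltr0n // mul1r ler_nat.
have sum_F w : \sum_(i < n) F w i = \sum_e w e * \sum_(i < n) lnkernel (i%:R / n%:R) (y e).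
  by rewrite exchange_big; apply: eq_bigr => e _; rewrite mulr_sumr.
have sum_F1 w : \sum_(i < n) F w i.+1 =
    \sum_e w e * \sum_(i < n) lnkernel (i.+1%:R / n%:R) (y e).
  by rewrite exchange_big; apply: eq_bigr => e _; rewrite mulr_sumr.
have left_q : \sum_e q e * ln (1 - y e) <= - (n%:R^-1 * \sum_(i < n) F q i).
  rewrite sum_F mulr_sumr -sumrN; apply: ler_sum => e _.
  by rewrite mulrCA -mulrN ler_wpM2l ?ln1m_le_riemann_left.
have right_p : - (n%:R^-1 * \sum_(i < n) F p i.+1) <= \sum_e p e * ln (1 - y e).
  rewrite sum_F1 mulr_sumr -sumrN; apply: ler_sum => e _.
  by rewrite mulrCA -mulrN ler_wpM2l ?ln1m_ge_riemann_right.
have riemann_pq : \sum_(i < n) F p i <= \sum_(i < n) F q i.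
  by apply: ler_sum => i _; apply: sum_lnkernel_le_of_moments; rewrite nodeP // ltnW.
have shift : \sum_(i < n) F p i = \sum_(i < n) F p i.+1 + F p 0%N - F p n.
  have := telescope_sumr (F p) (leq0n n).
  rewrite big_mkord sumrB => /(congr1 (fun x => x + \sum_(i < n) F p i)).
  by rewrite subrK => ->; ring.
have Fp0 : F p 0%N = \sum_e p e * lnkernel 0 (y e) by rewrite /F mul0r.
have Fpn : F p n = \sum_e p e * lnkernel 1 (y e).
  by rewrite /F divff // pnatr_eq0 -lt0n.
apply: (le_trans left_q); apply: le_trans (_ : - (n%:R^-1 * \sum_(i < n) F p i) <= _).
  by rewrite lerN2 ler_wpM2l ?invr_ge0.
rewrite shift -Fp0 -Fpn.
have -> : - (n%:R^-1 * (\sum_(i < n) F p i.+1 + F p 0%N - F p n)) =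
  - (n%:R^-1 * \sum_(i < n) F p i.+1) + (F p n - F p 0%N) / n%:R by ring.
by rewrite lerD2r.
Qed.
End MomentComparison.

Section FiniteSums.
Context {R : realType}.

Lemma prod_natr_forall (I : finType) (P : pred I) :
  \prod_(i : I) ((P i)%:R : R) = ([forall i, P i])%:R.
Proof.
have [/forallP allP|/forallP notallP] := boolP [forall i, P i].
  by rewrite big1 // => i _; rewrite allP.
have [i /negbTE Pi] : exists i, ~~ P i.
  by apply/existsP; rewrite -negb_forall; apply/forallP.
by rewrite (bigD1 i) //= Pi mul0r.
Qed.

Lemma sum_ffun_prod (T : finType) K (g : T -> R) :
  \sum_(v : {ffun 'I_K -> T}) \prod_(j < K) g (v j) = (\sum_x g x) ^+ K.
Proof.
by rewrite -(bigA_distr_bigA (fun (_ : 'I_K) (x : T) => g x)) prodr_const card_ord.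
Qed.

Lemma convex_exprn {p q a b : R} K : 0 <= p -> 0 <= q -> p + q = 1 ->
  0 <= a -> 0 <= b -> (p * a + q * b) ^+ K <= p * a ^+ K + q * b ^+ K.
Proof.
move=> p0 q0 pq a0 b0; elim: K => [|K IH]; first by rewrite !expr0 !mulr1 pq.
have s0 : 0 <= p * a + q * b by rewrite addr_ge0 ?mulr_ge0.
rewrite exprSr; apply: (le_trans (ler_wpM2r s0 IH)).
have monotone : 0 <= (a ^+ K - b ^+ K) * (a - b).
  have [ab|/ltW ba] := leP a b.
    by rewrite mulr_le0 // subr_le0 // lerXn2r.
  by rewrite mulr_ge0 // subr_ge0 // lerXn2r.
have -> : p * a ^+ K.+1 + q * b ^+ K.+1 = (p * a ^+ K + q * b ^+ K) * (p * a + q * b)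
    + p * q * ((a ^+ K - b ^+ K) * (a - b)).
  have -> : q = 1 - p by lra.
  by rewrite !exprSr; ring.
by rewrite lerDl mulr_ge0 // mulr_ge0.
Qed.

End FiniteSums.

Definition ffun_upd (T : Type) M (G : {ffun 'I_M -> T}) (k0 : 'I_M) (e : T) :=
  [ffun k => if k == k0 then e else G k].
Arguments ffun_upd {T M}.

Lemma sum_ffun_upd {R : realType} {T : finType} {M} (k0 : 'I_M)
    (F : {ffun 'I_M -> T} -> R) :
  #|T|%:R * \sum_G F G = \sum_G \sum_(e : T) F (ffun_upd G k0 e).
Proof.
pose swap (p : {ffun 'I_M -> T} * T) := (ffun_upd p.1 k0 p.2, p.1 k0).
have swapK : involutive swap.
  case=> G e; rewrite /swap /=; congr (_, _); last by rewrite ffunE eqxx.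
  by apply/ffunP => k; rewrite !ffunE; case: eqP => // ->.
transitivity (\sum_(p : {ffun 'I_M -> T} * T) F p.1).
  rewrite -(pair_bigA _ (fun G (_ : T) => F G)) /= mulr_sumr.
  by apply: eq_bigr => G _; rewrite sumr_const mulr_natl.
rewrite (reindex_inj (inv_inj swapK)) /=.
by rewrite (pair_bigA _ (fun G e => F (ffun_upd G k0 e))).
Qed.

Section Weights.
Context {R : realType}.
Implicit Types (lam : R) (h : \bar R) (m : model R).

Lemma lampow_ge0 lam h : 0 <= lampow R lam h.
Proof. by case: h => [r| |] //=; exact: powR_ge0. Qed.

Lemma lampow_gt0 lam h : 0 < lam -> h \is a fin_num -> 0 < lampow R lam h.
Proof. by move=> l0; case: h => [r| |] //= _; exact: powR_gt0. Qed.

Lemma lampow_le lam h h' : 1 <= lam -> (h <= h')%E -> (h' < +oo)%E ->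
  lampow R lam h <= lampow R lam h'.
Proof.
move=> lam1; case: h => [r| |]; case: h' => [r'| |] //= *; rewrite ?lampow_ge0 ?powR_ge0 //.
by rewrite ler_powR // -lee_fin.
Qed.

Lemma lampowD lam (h h' : \bar R) : 0 < lam -> (h < +oo)%E -> (h' < +oo)%E ->
  lampow R lam (h + h')%E = lampow R lam h * lampow R lam h'.
Proof.
move=> l0; case: h => [r| |] //; case: h' => [s| |] //= _ _; rewrite ?mul0r ?mulr0 //.
by rewrite powRD // (lt0r_neq0 l0) implybT.
Qed.

Lemma lampow_sum lam (I : Type) (r : seq I) (P : pred I) (F : I -> \bar R) :
  0 < lam -> (forall i, P i -> (F i < +oo)%E) ->
  lampow R lam (\sum_(i <- r | P i) F i)%E = \prod_(i <- r | P i) lampow R lam (F i).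
Proof.
move=> l0 Foo; elim: r => [|a r IH]; first by rewrite !big_nil /= powRr0.
rewrite !big_cons; case: ifP => Pa //.
by rewrite lampowD ?IH ?Foo ?lte_sum_pinfty.
Qed.

Lemma Hnode_fin m s : Hnode R m s \is a fin_num.
Proof. by case: m => //= *; case: ifP. Qed.

Lemma Hnode_lt_pinfty m s : (Hnode R m s < +oo)%E.
Proof. by case: m => //= *; case: ifP; rewrite ltry. Qed.

Lemma Hedge_lt_pinfty m a xe : (Hedge R m a xe < +oo)%E.
Proof. by case: m a xe => /= [| |? ?|?|?|?] a xe; case: ifP; rewrite ?ltNye ?ltry. Qed.

Lemma Hedge_const0_fin m a : Hedge R m a (fun _ => 0%N) \is a fin_num.
Proof.
case: m a => /= [| |? ?|?|?|?] a; case: ifP => //.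
by move/forallP => /(_ ord0).
Qed.

End Weights.

Section EdgeMixture.
Context {R : realType} {m : model R} {lam : R}.

(* This is all the interpolation argument uses about the model. *)
Record edge_mixture := EdgeMixture {
  mix_scale : R;
  mix_rate : R;
  mix_size : nat;
  mix_factor : 'I_mix_size -> bool -> nat -> R;
  mix_sign : bool -> R;
  mix_scale_gt0 : 0 < mix_scale;
  mix_rate_ge0 : 0 <= mix_rate;
  mix_factor_ge0 : forall c b s, 0 <= mix_factor c b s;
  mix_sign_ge0 : forall b, 0 <= mix_sign b;
  mix_weightE : forall (a : 'I_(arity R m) -> bool) (xe : 'I_(arity R m) -> nat),
    (forall j, xe j < spins R m)%N ->
    lampow R lam (Hedge R m a xe) =
    mix_scale * (1 - mix_rate * \sum_c \prod_j mix_factor c (a j) (xe j));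
  mix_psignE : forall a : {ffun 'I_(arity R m) -> bool},
    psign R m a = \prod_j mix_sign (a j)
}.

End EdgeMixture.
Arguments edge_mixture {R} m lam.

Section EdgeMixtures.
Context {R : realType}.
Implicit Types (lam : R) (m : model R).

Lemma indicator_edge_mixture m lam (h0 h1 : \bar R)
    (P : ('I_(arity R m) -> bool) -> ('I_(arity R m) -> nat) -> bool)
    nc (phi : 'I_nc -> bool -> nat -> R) (rho : bool -> R) :
  1 <= lam -> h1 \is a fin_num -> (h0 <= h1)%E ->
  (forall a xe, Hedge R m a xe = if P a xe then h0 else h1) ->
  (forall a xe, (forall j, xe j < spins R m)%N ->
     (P a xe)%:R = \sum_c \prod_j phi c (a j) (xe j)) ->
  (forall c b s, 0 <= phi c b s) -> (forall b, 0 <= rho b) ->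
  (forall a : {ffun 'I_(arity R m) -> bool}, psign R m a = \prod_j rho (a j)) ->
  edge_mixture m lam.
Proof.
move=> lam1 h1_fin h01 HE PE phi0 rho0 signE.
have w1 : 0 < lampow R lam h1 by rewrite lampow_gt0 // (lt_le_trans ltr01).
have w01 : lampow R lam h0 <= lampow R lam h1.
  by rewrite lampow_le // ltey; case: (h1) h1_fin.
apply: (@EdgeMixture _ _ _ (lampow R lam h1) (1 - lampow R lam h0 / lampow R lam h1)
  nc phi rho) => //.
- by rewrite subr_ge0 ler_pdivrMr // mul1r.
move=> a xe xe_lt; rewrite HE -PE //.
case: (P a xe); last by rewrite mulr0 subr0 mulr1.
by rewrite mulr1; field; apply: lt0r_neq0.
Qed.

Lemma sum_prod_eqn_alleq {K q : nat} (xe : 'I_K -> nat) :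
  (0 < K)%N -> (forall j, xe j < q)%N ->
  ([forall j, forall j', xe j == xe j'])%:R =
  \sum_(c < q) \prod_(j < K) ((xe j == c)%:R : R).
Proof.
move=> K0 xe_lt; under eq_bigr do rewrite prod_natr_forall.
pose j0 : 'I_K := Ordinal K0.
have [/forallP alleq|notalleq] := boolP [forall j, forall j', xe j == xe j'].
  rewrite (bigD1 (Ordinal (xe_lt j0))) //= big1 ?addr0.
    suff -> : [forall j, xe j == xe j0] by [].
    by apply/forallP => j; have /forallP := alleq j => /(_ j0).
  move=> c /negbTE c_neq; case: (boolP [forall j, xe j == c]) => // /forallP /(_ j0) /eqP h.
  by move: c_neq; rewrite -val_eqE /= h eqxx.
rewrite big1 // => c _; case: (boolP [forall j, xe j == c]) => // /forallP xe_c.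
case/negP: notalleq; apply/forallP => j; apply/forallP => j'.
by rewrite (eqP (xe_c j)) (eqP (xe_c j')).
Qed.

Lemma signless_psignE (K : nat) (a : {ffun 'I_K -> bool}) :
  ((a == [ffun => false])%:R : R) = \prod_(j < K) ((a j == false)%:R).
Proof.
rewrite prod_natr_forall; suff -> : (a == [ffun => false]) = [forall j, a j == false] by [].
apply/idP/idP => [/eqP ->|/forallP a_false]; first by apply/forallP => j; rewrite ffunE.
by apply/eqP/ffunP => j; rewrite ffunE; apply/eqP.
Qed.

Lemma signed_psignE (K : nat) : ((2 ^ K)%:R^-1 : R) = \prod_(j < K) 2^-1.
Proof. by rewrite prodr_const card_ord natrX exprVn. Qed.

Lemma alleq_edge_mixture (m : model R) (lam h0 h1 : R) :
  (forall a xe, Hedge R m a xe =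
     if [forall j, forall j', xe j == xe j'] then h0%:E else h1%:E) ->
  arity R m = 2%N -> has_signs R m = false ->
  1 <= lam -> h0 <= h1 -> edge_mixture m lam.
Proof.
move=> HE m2 signless lam1 h01.
apply: (@indicator_edge_mixture m lam h0%:E h1%:E
  (fun _ xe => [forall j, forall j', xe j == xe j']) (spins R m)
  (fun c _ s => (s == nat_of_ord c)%:R) (fun b => (b == false)%:R)) => //.
- by move=> a xe xe_lt; rewrite (sum_prod_eqn_alleq xe _ xe_lt) // m2.
- by move=> a; rewrite /psign signless signless_psignE.
Qed.

Lemma model_edge_mixture (m : model R) (lam : R) :
  model_ok R m -> 1 < lam -> edge_mixture m lam.
Proof.
move=> ok /ltW lam1.
case: m ok => [| |beta B|q|K|K] /= ok.
- apply: (@indicator_edge_mixture IndSet lam -oo%E 0%E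
    (fun _ xe => [forall j, xe j == 1%N]) 1 (fun _ _ s => (s == 1%N)%:R)
    (fun b => (b == false)%:R)) => //.
  - by move=> a xe _; rewrite big_ord1 prod_natr_forall.
  - by move=> a; rewrite /psign /= signless_psignE.
- by apply: (@alleq_edge_mixture MaxCut lam 0 1).
- by apply: (@alleq_edge_mixture (Ising R beta B) lam (- beta) beta) => //; lra.
- by apply: (@alleq_edge_mixture (Coloring R q) lam 0 1).
- apply: (@indicator_edge_mixture (KSAT R K) lam 0%E 1%E
    (fun a xe => [forall j, xe j == nat_of_bool (a j)]) 1
    (fun _ b s => (s == nat_of_bool b)%:R) (fun _ => 2^-1)) => //.
  - by move=> a xe _; rewrite big_ord1 prod_natr_forall.
  - by move=> a; rewrite /psign /= signed_psignE.
- apply: (@indicator_edge_mixture (NAEKSAT R K) lam 0%E 1%E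
    (fun a xe => [forall j, xe j == nat_of_bool (a j)]
              || [forall j, xe j == nat_of_bool (~~ a j)]) 2
    (fun c b s => (s == nat_of_bool (if val c == 0%N then b else ~~ b))%:R)
    (fun _ => 2^-1)) => //.
  - move=> a xe _; rewrite big_ord_recl big_ord1 /= !prod_natr_forall.
    have j0 : 'I_K := Ordinal (ltnW ok).
    have [/forallP xe_a|] /= := boolP [forall j, xe j == a j]; last by rewrite add0r.
    suff -> : [forall j, xe j == ~~ a j] = false by rewrite addr0.
    by apply/negbTE/negP => /forallP /(_ j0); rewrite (eqP (xe_a j0)); case: (a j0).
  - by move=> a; rewrite /psign /= signed_psignE.
Qed.

End EdgeMixtures.

Section VertexLaw.
Context {R : realType} (m : model R) {N N1 N2 : nat}.
Local Notation K := (arity R m).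
Local Notation pvert := (pvert R m N N1 N2).

Lemma pvert_ge0 r k v : 0 <= pvert r k v.
Proof.
rewrite /pvert; case: ifP => _; first by rewrite invr_ge0.
by rewrite addr_ge0 // !mulr_ge0 // ?invr_ge0 ?divr_ge0.
Qed.

Lemma psign_ge0 a : 0 <= psign R m a.
Proof. by rewrite /psign; case: ifP => _; rewrite ?invr_ge0. Qed.

Lemma sum_natr_ltn : (N1 <= N)%N -> \sum_(u < N) (((u < N1)%N)%:R : R) = N1%:R.
Proof.
move=> N1N; rewrite -(big_mkord xpredT (fun u => (((u < N1)%N)%:R : R))).
rewrite (big_cat_nat (leq0n N1) N1N) /= (eq_big_nat _ _ (F2 := fun _ => 1)).
  rewrite [X in _ + X](eq_big_nat _ _ (F2 := fun _ => 0)).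
    by rewrite [X in _ + X]big1_eq addr0 sumr_const_nat subn0.
  by move=> i /andP[N1i _]; rewrite ltnNge N1i.
by move=> i /andP[_ ->].
Qed.

Lemma sum_pvert_prod r k (g : 'I_N -> R) :
  \sum_(v : {ffun 'I_K -> 'I_N}) pvert r k v * \prod_(j < K) g (v j)
  = if (k < r)%N then (N ^ K)%:R^-1 * (\sum_u g u) ^+ K
    else N1%:R / N%:R * (N1 ^ K)%:R^-1 * (\sum_(u : 'I_N) ((u < N1)%N)%:R * g u) ^+ K
       + N2%:R / N%:R * (N2 ^ K)%:R^-1 * (\sum_(u : 'I_N) ((N1 <= u)%N)%:R * g u) ^+ K.
Proof.
rewrite /pvert; case: ifP => _; first by rewrite -mulr_sumr sum_ffun_prod.
rewrite -!sum_ffun_prod !mulr_sumr -big_split /=; apply: eq_bigr => v _.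
rewrite mulrDl -!mulrA -!(prod_natr_forall) -!big_split /=.
by congr (_ * _ + _ * _).
Qed.

Hypotheses (N1_gt0 : (0 < N1)%N) (N2_gt0 : (0 < N2)%N) (N1N2 : (N1 + N2 = N)%N).

Let N1_le : (N1 <= N)%N. Proof. by rewrite -N1N2 leq_addr. Qed.
Let N_gt0 : 0 < N%:R :> R. Proof. by rewrite ltr0n -N1N2 addn_gt0 N1_gt0. Qed.
Let N1_gt0R : 0 < N1%:R :> R. Proof. by rewrite ltr0n. Qed.
Let N2_gt0R : 0 < N2%:R :> R. Proof. by rewrite ltr0n. Qed.

Lemma sum_natr_geq : \sum_(u < N) (((N1 <= u)%N)%:R : R) = N2%:R.
Proof.
transitivity (\sum_(u < N) (1 - (((u < N1)%N)%:R : R))).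
  by apply: eq_bigr => u _; rewrite ltnNge; case: (N1 <= u)%N; rewrite ?subr0 ?subrr.
by rewrite sumrB sum_natr_ltn // sumr_const card_ord -natrB // -N1N2 addKn.
Qed.

Lemma sum_pvert r k : \sum_(v : {ffun 'I_K -> 'I_N}) pvert r k v = 1.
Proof.
transitivity (\sum_(v : {ffun 'I_K -> 'I_N}) pvert r k v * \prod_(j < K) (1 : R)).
  by apply: eq_bigr => v _; rewrite big1 ?mulr1.
rewrite (sum_pvert_prod r k (fun _ => 1)); case: ifP => _.
  by rewrite sumr_const card_ord natrX mulVf // expf_neq0 // lt0r_neq0.
under eq_bigr do rewrite mulr1.
under [X in _ + _ * X ^+ _]eq_bigr do rewrite mulr1.
rewrite sum_natr_ltn // sum_natr_geq !natrX !mulfVK ?expf_neq0 ?lt0r_neq0 //.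
by rewrite -mulrDl -natrD N1N2 divff // lt0r_neq0.
Qed.

(* By convexity of [x ^+ K], splitting [(a + b) / N] as
   [N1/N * (a / N1) + N2/N * (b / N2)] can only increase the [K]-th power. *)
Lemma sum_pvert_prod_uniform_le_planted r k r' k' (g : 'I_N -> R) :
  (forall u, 0 <= g u) -> (k < r)%N -> ~~ (k' < r')%N ->
  \sum_(v : {ffun 'I_K -> 'I_N}) pvert r k v * \prod_(j < K) g (v j)
  <= \sum_(v : {ffun 'I_K -> 'I_N}) pvert r' k' v * \prod_(j < K) g (v j).
Proof.
move=> g0 uniform planted; rewrite !sum_pvert_prod uniform (negbTE planted).
set a := \sum_(u : 'I_N) ((u < N1)%N)%:R * g u.
set b := \sum_(u : 'I_N) ((N1 <= u)%N)%:R * g u.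
have split_ab : \sum_u g u = a + b.
  rewrite /a /b -big_split /=; apply: eq_bigr => u _.
  by case: (ltnP u N1); rewrite /= ?mul1r ?mul0r ?addr0 ?add0r.
have a0 : 0 <= a by rewrite sumr_ge0 // => u _; rewrite mulr_ge0.
have b0 : 0 <= b by rewrite sumr_ge0 // => u _; rewrite mulr_ge0.
have := convex_exprn K (divr_ge0 (ltW N1_gt0R) (ltW N_gt0))
  (divr_ge0 (ltW N2_gt0R) (ltW N_gt0)) _ (divr_ge0 a0 (ltW N1_gt0R))
  (divr_ge0 b0 (ltW N2_gt0R)).
have -> : N1%:R / N%:R * (a / N1%:R) + N2%:R / N%:R * (b / N2%:R) = (a + b) / N%:R.
  by field; rewrite !lt0r_neq0.
rewrite split_ab !exprMn !exprVn !natrX -mulrDl -natrD N1N2 divff ?lt0r_neq0 //.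
move=> /(_ erefl) jensen; rewrite [leLHS]mulrC; apply: (le_trans jensen).
by rewrite le_eqVlt; apply/predU1P; left; ring.
Qed.
End VertexLaw.

Section EdgeMoments.
Context {R : realType}.
Variables (m : model R) (N N1 N2 : nat).
Local Notation K := (arity R m).
Local Notation config := {ffun 'I_N -> 'I_(spins R m)}.
Hypotheses (N1_gt0 : (0 < N1)%N) (N2_gt0 : (0 < N2)%N) (N1N2 : (N1 + N2 = N)%N).

Definition pedge r k (e : hedge R m N) := pvert R m N N1 N2 r k e.1 * psign R m e.2.

Lemma pedge_ge0 r k e : 0 <= pedge r k e.
Proof. by rewrite mulr_ge0 ?pvert_ge0 ?psign_ge0. Qed.

Lemma sum_pedge r k :
  \sum_e pedge r k e = \sum_(a : {ffun 'I_K -> bool}) psign R m a.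
Proof.
rewrite -(pair_bigA _ (fun (v : {ffun 'I_K -> 'I_N}) (a : {ffun 'I_K -> bool}) =>
  pvert R m N N1 N2 r k v * psign R m a)) /=.
under eq_bigr do rewrite -mulr_sumr.
by rewrite -mulr_suml (sum_pvert m N1_gt0 N2_gt0 N1N2) mul1r.
Qed.

Variables (nc : nat) (phi : 'I_nc -> bool -> nat -> R) (rho : bool -> R).
Hypothesis psignE : forall a : {ffun 'I_K -> bool}, psign R m a = \prod_j rho (a j).
Hypotheses (phi_ge0 : forall c b s, 0 <= phi c b s) (rho_ge0 : forall b, 0 <= rho b).

Definition edge_factor (e : hedge R m N) (x : config) : R :=
  \sum_(c < nc) \prod_(j < K) phi c (e.2 j) (x (e.1 j)).

Definition edge_load (W : config -> R) (e : hedge R m N) : R :=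
  \sum_x W x * edge_factor e x.

Lemma sum_pedge_prod r k (psi : bool -> 'I_N -> R) :
  \sum_e pedge r k e * \prod_(j < K) psi (e.2 j) (e.1 j)
  = \sum_(v : {ffun 'I_K -> 'I_N}) pvert R m N N1 N2 r k v
      * \prod_(j < K) \sum_b rho b * psi b (v j).
Proof.
rewrite -(pair_bigA _ (fun (v : {ffun 'I_K -> 'I_N}) (a : {ffun 'I_K -> bool}) =>
  pvert R m N N1 N2 r k v * psign R m a * \prod_(j < K) psi (a j) (v j))) /=.
apply: eq_bigr => v _; rewrite (bigA_distr_bigA (fun j b => rho b * psi b (v j))) /=.
by rewrite mulr_sumr; apply: eq_bigr => a _; rewrite psignE big_split /= mulrA.
Qed.

(* Expanding the [t]-th power over [t] independent configurations [X] and
   colours [ga] exhibits [E (edge_load W)^t] as a nonnegative combination of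
   [E prod_j g(v_j)] for nonnegative [g]. *)
Lemma sum_pedge_load_exprn r k (W : config -> R) t :
  \sum_e pedge r k e * edge_load W e ^+ t
  = \sum_(X : {ffun 'I_t -> config}) (\prod_(l < t) W (X l)) *
     \sum_(ga : {ffun 'I_t -> 'I_nc}) \sum_(v : {ffun 'I_K -> 'I_N})
       pvert R m N N1 N2 r k v * \prod_(j < K)
         \sum_b rho b * \prod_(l < t) phi (ga l) b (X l (v j)).
Proof.
under eq_bigr do rewrite /edge_load -sum_ffun_prod mulr_sumr.
rewrite exchange_big /=; apply: eq_bigr => X _.
transitivity ((\prod_(l < t) W (X l)) *
    \sum_e pedge r k e * \prod_(l < t) edge_factor e (X l)).
  by rewrite mulr_sumr; apply: eq_bigr => e _; rewrite big_split /=; ring.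
congr (_ * _).
transitivity (\sum_(ga : {ffun 'I_t -> 'I_nc}) \sum_e pedge r k e *
    \prod_(j < K) (fun b u => \prod_(l < t) phi (ga l) b (X l u)) (e.2 j) (e.1 j)).
  rewrite exchange_big /=; apply: eq_bigr => e _; rewrite -mulr_sumr; congr (_ * _).
  rewrite (bigA_distr_bigA (fun l c => \prod_(j < K) phi c (e.2 j) (X l (e.1 j)))) /=.
  by apply: eq_bigr => ga _; rewrite exchange_big.
by apply: eq_bigr => ga _; exact: (sum_pedge_prod r k
  (fun b u => \prod_(l < t) phi (ga l) b (X l u))).
Qed.

Lemma sum_pedge_load_exprn_uniform_le_planted r k r' k' (W : config -> R) t :
  (forall x, 0 <= W x) -> (k < r)%N -> ~~ (k' < r')%N ->
  \sum_e pedge r k e * edge_load W e ^+ t <= \sum_e pedge r' k' e * edge_load W e ^+ t.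
Proof.
move=> W0 uniform planted; rewrite !sum_pedge_load_exprn.
apply: ler_sum => X _; rewrite ler_wpM2l ?prodr_ge0 //.
apply: ler_sum => ga _.
apply: (sum_pvert_prod_uniform_le_planted m N1_gt0 N2_gt0 N1N2 _ _ _ _
  (fun u => \sum_b rho b * \prod_(l < t) phi (ga l) b (X l u))) => // u.
by rewrite sumr_ge0 // => b _; rewrite mulr_ge0 ?prodr_ge0.
Qed.
End EdgeMoments.
Arguments pedge {R} m {N} N1 N2 r k e.
Arguments edge_factor {R m N nc} phi e x.
Arguments edge_load {R m N nc} phi W e.
Arguments sum_pedge {R m N N1 N2}.
Arguments sum_pedge_load_exprn_uniform_le_planted {R m N N1 N2} _ _ _ {nc phi rho}.

Section PartitionFunction.
Context {R : realType}.
Variables (m : model R) (lam : R).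
Hypotheses (m_ok : model_ok R m) (lam_gt1 : 1 < lam).
Let lam_gt0 : 0 < lam. Proof. exact: lt_trans ltr01 lam_gt1. Qed.
Local Notation config N := {ffun 'I_N -> 'I_(spins R m)}.

Definition node_weight {N} (x : config N) : R :=
  \prod_(i < N) lampow R lam (Hnode R m (x i)).

Definition edge_weight {N} (e : hedge R m N) (x : config N) : R :=
  lampow R lam (Hedge R m e.2 (fun j => nat_of_ord (x (e.1 j)))).

Definition weight_but {N M} (G : hgraph R m N M) (k0 : 'I_M) (x : config N) : R :=
  node_weight x * \prod_(k < M | k != k0) edge_weight (G k) x.

Lemma Zpart_factor N M (G : hgraph R m N M) :
  Zpart R m lam N M G = \sum_x node_weight x * \prod_(k < M) edge_weight (G k) x.
Proof.
apply: eq_bigr => x _.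
by rewrite /Ham lampowD ?lampow_sum ?lte_sum_pinfty // => *;
  rewrite ?Hnode_lt_pinfty ?Hedge_lt_pinfty.
Qed.

Lemma Zpart_gt0 N M (G : hgraph R m N M) : 0 < Zpart R m lam N M G.
Proof.
have q_gt0 : (0 < spins R m)%N by case: m m_ok.
pose x0 : config N := [ffun _ => Ordinal q_gt0].
rewrite Zpart_factor (bigD1 x0) //= ltr_pwDl ?sumr_ge0 // => [|x _].
  rewrite mulr_gt0 // prodr_gt0 // => [i _|k _]; first by rewrite lampow_gt0 ?Hnode_fin.
  rewrite /edge_weight (_ : (fun j => _) = fun _ => 0%N); last first.
    by apply: funext => j; rewrite ffunE.
  by rewrite lampow_gt0 ?Hedge_const0_fin.
by rewrite mulr_ge0 ?prodr_ge0 // => *; rewrite lampow_ge0.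
Qed.

Lemma weight_but_ge0 N M (G : hgraph R m N M) k0 x : 0 <= weight_but G k0 x.
Proof. by rewrite mulr_ge0 ?prodr_ge0 // => *; rewrite lampow_ge0. Qed.

Lemma Zpart_ffun_upd N M (G : hgraph R m N M) k0 e :
  Zpart R m lam N M (ffun_upd G k0 e) = \sum_x weight_but G k0 x * edge_weight e x.
Proof.
rewrite Zpart_factor; apply: eq_bigr => x _.
rewrite (bigD1 k0) //= ffunE eqxx /weight_but.
rewrite (eq_bigr (fun k => edge_weight (G k) x)); first by ring.
by move=> k /negbTE k_neq; rewrite ffunE k_neq.
Qed.

Lemma Zpart_ffun_upd_mixture (mix : edge_mixture m lam) N M (G : hgraph R m N M)
    k0 e :
  Zpart R m lam N M (ffun_upd G k0 e) = mix_scale mix * (\sum_x weight_but G k0 x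
    - mix_rate mix * edge_load (mix_factor mix) (weight_but G k0) e).
Proof.
rewrite Zpart_ffun_upd /edge_load mulr_sumr -sumrB mulr_sumr; apply: eq_bigr => x _.
by rewrite /edge_weight (mix_weightE mix) // /edge_factor; ring.
Qed.

End PartitionFunction.

Section Resampling.
Context {R : realType}.
Variables (m : model R) (lam : R) (N N1 N2 M : nat).
Hypotheses (m_ok : model_ok R m) (lam_gt1 : 1 < lam).
Hypotheses (N1_gt0 : (0 < N1)%N) (N2_gt0 : (0 < N2)%N) (N1N2 : (N1 + N2 = N)%N).

Lemma resample_edge_ln_Zpart_le (G : hgraph R m N M) k0 r k r' k' :
  (k < r)%N -> ~~ (k' < r')%N ->
  \sum_e pedge m N1 N2 r' k' e * ln (Zpart R m lam N M (ffun_upd G k0 e))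
  <= \sum_e pedge m N1 N2 r k e * ln (Zpart R m lam N M (ffun_upd G k0 e)).
Proof.
move=> uniform planted.
pose mix := model_edge_mixture m lam m_ok lam_gt1.
have A_gt0 := mix_scale_gt0 mix; have d_ge0 := mix_rate_ge0 mix.
pose W := weight_but m lam G k0; pose Z0 := \sum_x W x.
pose S := edge_load (mix_factor mix) W; pose y e := mix_rate mix * S e / Z0.
have W_ge0 x : 0 <= W x by exact: weight_but_ge0.
have dS_ge0 e : 0 <= mix_rate mix * S e.
  rewrite mulr_ge0 // sumr_ge0 // => x _; rewrite mulr_ge0 // sumr_ge0 // => c _.
  by rewrite prodr_ge0 // => j _; exact: mix_factor_ge0.
have Zy_gt0 e : 0 < Z0 - mix_rate mix * S e.
  rewrite -(pmulr_rgt0 _ A_gt0) -(Zpart_ffun_upd_mixture _ _ lam_gt1).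
  exact: Zpart_gt0.
have Z0_gt0 (e : hedge R m N) : 0 < Z0 by have := Zy_gt0 e; have := dS_ge0 e; lra.
have y_in01 e : 0 <= y e < 1.
  by rewrite divr_ge0 ?(ltW (Z0_gt0 e)) //= ltr_pdivrMr ?mul1r ?(Z0_gt0 e) // -subr_gt0.
have lnZ e : ln (Zpart R m lam N M (ffun_upd G k0 e)) =
    ln (mix_scale mix) + ln Z0 + ln (1 - y e).
  have y_lt1 : 0 < 1 - y e by rewrite subr_gt0; case/andP: (y_in01 e).
  rewrite (Zpart_ffun_upd_mixture _ _ lam_gt1 mix) -/W -/Z0 -/S.
  have -> : Z0 - mix_rate mix * S e = Z0 * (1 - y e).
    by rewrite /y; field; rewrite lt0r_neq0 // (Z0_gt0 e).
  by rewrite !lnM ?posrE ?mulr_gt0 ?(Z0_gt0 e) // addrA.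
under eq_bigr do rewrite lnZ mulrDr.
under [leRHS]eq_bigr do rewrite lnZ mulrDr.
rewrite !big_split /= -!mulr_suml !(sum_pedge N1_gt0 N2_gt0 N1N2) lerD2l.
apply: sum_ln1m_le_of_moments => // [e|e|t]; rewrite ?pedge_ge0 //.
have yX e : y e ^+ t.+1 = (mix_rate mix / Z0) ^+ t.+1 * S e ^+ t.+1.
  by rewrite /y mulrAC exprMn.
under eq_bigr do rewrite yX mulrCA.
under [leRHS]eq_bigr do rewrite yX mulrCA.
rewrite -!mulr_sumr ler_wpM2l ?exprn_ge0 ?divr_ge0 ?sumr_ge0 //.
apply: (sum_pedge_load_exprn_uniform_le_planted N1_gt0 N2_gt0 N1N2 (mix_psignE mix))
  => //; [exact: mix_factor_ge0 | exact: mix_sign_ge0].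
Qed.

End Resampling.

Section GraphLaw.
Context {R : realType}.
Variables (m : model R) (lam : R) (N N1 N2 M : nat).

Lemma pgraph_ffun_upd r r' (k0 : 'I_M) (G : hgraph R m N M) e :
  (forall k : 'I_M, k != k0 -> (k < r')%N = (k < r)%N) ->
  pgraph R m N N1 N2 M r' (ffun_upd G k0 e) =
  pedge m N1 N2 r' k0 e * \prod_(k < M | k != k0) pedge m N1 N2 r k (G k).
Proof.
move=> same_law; rewrite /pgraph (bigD1 k0) //= ffunE eqxx; congr (_ * _).
by apply: eq_bigr => k k_neq; rewrite ffunE (negbTE k_neq) /pedge /pvert same_law.
Qed.

Lemma ElogZ_resample r r' (k0 : 'I_M) :
  (forall k : 'I_M, k != k0 -> (k < r')%N = (k < r)%N) ->
  #|{: hedge R m N}|%:R * ElogZ R m lam N N1 N2 M r' =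
  \sum_(G : hgraph R m N M) (\prod_(k < M | k != k0) pedge m N1 N2 r k (G k)) *
    \sum_e pedge m N1 N2 r' k0 e * ln (Zpart R m lam N M (ffun_upd G k0 e)).
Proof.
move=> same_law; rewrite /ElogZ (sum_ffun_upd k0); apply: eq_bigr => G _.
by rewrite mulr_sumr; apply: eq_bigr => e _; rewrite (pgraph_ffun_upd r) //; ring.
Qed.

End GraphLaw.

Theorem proposition3 (R : realType) (c lam : R) (m : model R)
  (N N1 N2 : nat) :
  0 < c -> 1 < lam -> model_ok R m ->
  (1 <= N1 <= N - 1)%N -> (1 <= N2 <= N - 1)%N -> (N1 + N2 = N)%N ->
  forall r : nat, (1 <= r <= Num.truncn (c * N%:R))%N ->
    ElogZ R m lam N N1 N2 (Num.truncn (c * N%:R)) r.-1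
    <= ElogZ R m lam N N1 N2 (Num.truncn (c * N%:R)) r.
Proof.
move=> _ lam_gt1 m_ok /andP[N1_gt0 _] /andP[N2_gt0 _] N1N2 r /andP[r_gt0 r_le].
set M := Num.truncn _ in r_le *.
have k0_lt : (r.-1 < M)%N by lia.
pose k0 : 'I_M := Ordinal k0_lt.
have same_law (k : 'I_M) : k != k0 -> (k < r.-1)%N = (k < r)%N.
  by rewrite -val_eqE /= => /eqP k_neq; apply/idP/idP; lia.
have hedge_pos : 0 < #|{: hedge R m N}|%:R :> R.
  have N_gt0 : (0 < N)%N by rewrite -N1N2 addn_gt0 N1_gt0.
  by rewrite ltr0n; apply/card_gt0P; exists ([ffun => Ordinal N_gt0], [ffun => false]).
rewrite -(ler_pM2l hedge_pos) !(ElogZ_resample m lam N N1 N2 M r _ k0) //.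
apply: ler_sum => G _; apply: ler_wpM2l; first by apply: prodr_ge0 => k _; exact: pedge_ge0.
by apply: resample_edge_ln_Zpart_le => //=; rewrite ?ltnn // prednK.
Qed.
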